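(* Let $X$ be a closed subset of $\mathbb{R}^n$ and let $q\ge p$ be nonnegative integers. Then $\tau^q(X)_p$ is a closed subbundle of $X\times\mathcal{P}_p^*$.
   Context: Notation. $\mathcal{P}_k$ is the space of real polynomials on $\mathbb{R}^n$ of degree $\le k$, $\mathcal{P}_k^*$ its dual, $r_k=\dim\mathcal{P}_k$. For $\xi\in\mathcal{P}_k^*$, $b\in\mathbb{R}^n$, $|\alpha|\le k$: $\xi_\alpha(b):=\xi(\tfrac1{\alpha!}(x-b)^\alpha)$; $\delta_a(P)=P(a)$. A bundle over $X$ with fibres in $W$ is a subset of $X\times W$ whose fibres are linear subspaces. Paratangent bundle of order $k$: for a bundle $E\subset X\times\mathcal{P}_k^*$, $\Delta E=\{(a,b,\xi+\eta):a,b\in X,\xi\in E_a,\eta\in E_b,|a-b|^{k-|\alpha|}|\eta_\alpha(b)|\le1\ \forall|\alpha|\le k\}$, $E'=\{(a,\xi):(a,a,\xi)\in\overline{\Delta E}\}$ (closure in $X\times X\times\mathcal{P}_k^*$), $\rho(E)=\{(a,\xi):\xi\in\operatorname{Span}E'_a\}$; with $E_0=\{(a,\lambda\delta_a):a\in X,\lambda\in\mathbb{R}\}$, $\rho^i(E_0)$ is constant for $i\ge2r_k$ and $\tau^k(X):=\rho^{2r_k}(E_0)$, with fibres $\tau^k_a(X)$. For $a\in\mathbb{R}^n$ let $\pi_a:\mathcal{P}_q\to\mathcal{P}_p$ send $\sum_{|\beta|\le q}c_\beta(x-a)^\beta$ to $\sum_{|\beta|\le p}c_\beta(x-a)^\beta$,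 and let $\iota_a:\mathcal{P}_p^*\to\mathcal{P}_q^*$, $\iota_a(\xi)=\xi\circ\pi_a$ (an injection whose image is the annihilator of $\{P\in\mathcal{P}_q:D^\alpha P(a)=0,\ |\alpha|\le p\}$). $\tau^q(X)_p$ is the bundle over $X$ with fibres $\tau^q_a(X)_p:=\iota_a^{-1}(\tau^q_a(X))\subset\mathcal{P}_p^*$. *)

From HB Require Import structures.
From mathcomp Require Import all_boot all_order all_algebra.
From mathcomp Require Import reals.
From mathcomp Require Import mpoly.
Set Implicit Arguments. Unset Strict Implicit. Unset Printing Implicit Defensive.
Import Order.TTheory GRing.Theory Num.Theory.
Local Open Scope ring_scope.

Section ParaTangent.
Variables (R : realType) (n : nat).

Definition pt := 'I_n -> R.

(* multi-indices alpha with |alpha| <= k : the monomials x^alpha spanning P_k *)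
Definition midx (k : nat) := 'X_{1..n < k.+1}.

(* P_k^* : a linear functional xi on P_k is encoded by its values xi(x^alpha)
   on the monomial basis {x^alpha : |alpha| <= k}. *)
Definition dual (k : nat) := midx k -> R.

Definition dapp k (xi : dual k) (P : {mpoly R[n]}) : R :=
  \sum_(m : midx k) P@_(val m) * xi m.

Definition mfact (al : 'X_{1..n}) : R := (\prod_(i < n) (al i)`!)%:R.

Definition xshift (b : pt) (al : 'X_{1..n}) : {mpoly R[n]} :=
  \prod_(i < n) ('X_i - (b i)%:MP) ^+ (al i).

Definition xi_alpha k (xi : dual k) (al : midx k) (b : pt) : R :=
  dapp xi ((mfact (val al))^-1 *: xshift b (val al)).

Definition delta k (a : pt) : dual k := fun m => ('X_[val m] : {mpoly R[n]}).@[a].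

Definition enorm (v : pt) : R := Num.sqrt (\sum_(i < n) v i ^+ 2).

Definition bundle k := pt -> dual k -> Prop.

Definition DeltaE (X : pt -> Prop) k (E : bundle k) (a b : pt) (z : dual k) :=
  exists xi eta : dual k,
    [/\ X a /\ X b, E a xi, E b eta, z = (fun m => xi m + eta m) &
      forall al : midx k,
        enorm (fun i => a i - b i) ^+ (k - mdeg (val al)) *
          `|xi_alpha eta al b| <= 1].

(* closure in X x X x P_k^* (product topology, coordinatewise) *)
Definition closure3 (X : pt -> Prop) k (S : pt -> pt -> dual k -> Prop)
    (a b : pt) (z : dual k) :=
  [/\ X a, X b &
    forall e : R, 0 < e -> exists a' b' z',
      [/\ S a' b' z', forall i, `|a i - a' i| < e,
          forall i, `|b i - b' i| < e & forall m, `|z m - z' m| < e]].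

Definition Eprime (X : pt -> Prop) k (E : bundle k) : bundle k :=
  fun a z => closure3 X (DeltaE X E) a a z.

Inductive in_span k (S : dual k -> Prop) : dual k -> Prop :=
| span0 : in_span S (fun _ => 0)
| spanS : forall (c : R) (eta xi : dual k),
    S eta -> in_span S xi -> in_span S (fun m => c * eta m + xi m).

Definition rho (X : pt -> Prop) k (E : bundle k) : bundle k :=
  fun a z => X a /\ in_span (Eprime X E a) z.

Definition E0 (X : pt -> Prop) k : bundle k :=
  fun a z => X a /\ exists lam : R, z = (fun m => lam * @delta k a m).

Definition rdim k : nat := #|{: midx k}|.

Definition tau (X : pt -> Prop) k : bundle k :=
  iter (2 * rdim k) (@rho X k) (@E0 X k).

(* pi_a : P_q -> P_p : write P = sum c_beta (x-a)^beta (i.e. Q := P(x+a) =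
   sum c_beta x^beta), keep |beta| <= p, and substitute back x -> x - a. *)
Definition pi_a (p : nat) (a : pt) (P : {mpoly R[n]}) : {mpoly R[n]} :=
  let Q := P \mPo [tuple ('X_i + (a i)%:MP) | i < n] in
  (\sum_(m : midx p) Q@_(val m) *: 'X_[val m])
    \mPo [tuple ('X_i - (a i)%:MP) | i < n].

Definition iota_a (p q : nat) (a : pt) (xi : dual p) : dual q :=
  fun m => dapp xi (pi_a p a 'X_[val m]).

Definition tau_p (X : pt -> Prop) (p q : nat) : bundle p :=
  fun a xi => X a /\ @tau X q a (@iota_a p q a xi).

Definition closed_set (X : pt -> Prop) :=
  forall a : pt, (forall e : R, 0 < e -> exists a', X a' /\ forall i, `|a i - a' i| < e) ->
    X a.

Definition lin_subspace k (S : dual k -> Prop) :=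
  [/\ S (fun _ => 0),
      forall xi eta, S xi -> S eta -> S (fun m => xi m + eta m) &
      forall (c : R) xi, S xi -> S (fun m => c * xi m)].

Definition closed_subbundle (X : pt -> Prop) k (T : bundle k) :=
  [/\ forall a xi, T a xi -> X a,
      forall a, X a -> lin_subspace (T a) &
      forall a xi, X a ->
        (forall e : R, 0 < e -> exists a' xi',
           [/\ T a' xi', forall i, `|a i - a' i| < e & forall m, `|xi m - xi' m| < e]) ->
        T a xi].

End ParaTangent.

(* The fibres of rho(E) contain every limit (a, xi), a in X, of points of E:
   such a limit is the diagonal point (a, a, xi) of the closure of Delta E.
   Hence tau^k(X) is closed once the iteration E_j = rho^j(E_0) has become
   stationary at j = 2 r_k.  Stationarity comes from a dimension count: rho
   only looks at E near a, so if E_(j+2) grows at a then E_j grows at points b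
   arbitrarily close to a, and the fibre dimension is lower semicontinuous
   under rho (a cluster point of unit vectors in a fixed complement of
   rho(E)_a would be a nonzero vector of rho(E)_a in that complement).  Thus
   growth of E_(2m) at a forces dim E_(2m)(a) >= m, which is impossible for
   m > r_k.  Finally iota_a(xi) is linear in xi and its coordinates are
   polynomial in a, hence continuous in (a, xi), so the preimage tau^q(X)_p
   of tau^q(X) is again closed with linear fibres. *)

From HB Require Import structures.
From mathcomp Require Import all_boot all_order all_algebra.
From mathcomp Require Import reals.
From mathcomp Require Import mpoly.
From mathcomp Require Import classical_sets.
From Stdlib Require Import Classical FunctionalExtensionality.
From mathcomp Require Import zify ring lra.
Set Implicit Arguments. Unset Strict Implicit. Unset Printing Implicit Defensive.
Import Order.TTheory GRing.Theory Num.Theory.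
Local Open Scope ring_scope.

Section Closeness.
Variables (R : realType) (n k : nat).

Definition pt_close (e : R) (a b : pt R n) := forall i, `|a i - b i| < e.

Definition dual_close (e : R) (z z' : dual R n k) := forall m, `|z m - z' m| < e.

Definition in_closure (E : bundle R n k) (a : pt R n) (z : dual R n k) :=
  forall e : R, 0 < e -> exists a' z', [/\ E a' z', pt_close e a a' & dual_close e z z'].

Lemma pt_close_le (e e' : R) a b : e <= e' -> pt_close e a b -> pt_close e' a b.
Proof. by move=> ee' ab i; apply: lt_le_trans ee'. Qed.

Lemma dual_close_le (e e' : R) z z' : e <= e' -> dual_close e z z' -> dual_close e' z z'.
Proof. by move=> ee' zz' m; apply: lt_le_trans ee'. Qed.

Lemma pt_close_refl (e : R) a : 0 < e -> pt_close e a a.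
Proof. by move=> e0 i; rewrite subrr normr0. Qed.

Lemma pt_close_trans (e e' : R) a b c :
  pt_close e a b -> pt_close e' b c -> pt_close (e + e') a c.
Proof.
move=> ab bc i; rewrite -(subrKA (b i)).
by apply: le_lt_trans (ler_normD _ _) _; apply: ltrD.
Qed.

End Closeness.

Section Span.
Variables (R : realType) (n k : nat) (S : dual R n k -> Prop).

Lemma in_spanD x y : in_span S x -> in_span S y -> in_span S (fun m => x m + y m).
Proof.
elim=> [|c eta xi Seta _ IH] Sy.
  by have -> : (fun m => 0 + y m) = y by apply: functional_extensionality => m; rewrite add0r.
have -> : (fun m => c * eta m + xi m + y m) = (fun m => c * eta m + (xi m + y m)).
  by apply: functional_extensionality => m; rewrite addrA.
exact: spanS Seta (IH Sy).
Qed.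

Lemma in_spanZ c x : in_span S x -> in_span S (fun m => c * x m).
Proof.
elim=> [|d eta xi Seta _ IH].
  have -> : (fun m : midx n k => c * 0) = (fun _ => 0).
    by apply: functional_extensionality => m; rewrite mulr0.
  exact: span0.
have -> : (fun m => c * (d * eta m + xi m)) = (fun m => (c * d) * eta m + c * xi m).
  by apply: functional_extensionality => m; rewrite mulrDr mulrA.
exact: spanS Seta IH.
Qed.

Lemma in_span_mem z : S z -> in_span S z.
Proof.
move=> Sz; have -> : z = (fun m => 1 * z m + (fun _ => 0) m).
  by apply: functional_extensionality => m; rewrite mul1r addr0.
exact: spanS Sz (span0 S).
Qed.

End Span.

Section Rho.
Variables (R : realType) (n : nat) (X : pt R n -> Prop) (k : nat).
Implicit Types (E F : bundle R n k) (a b : pt R n) (z : dual R n k).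

Definition lin_bundle E :=
  (forall a z, E a z -> X a) /\ (forall a, X a -> lin_subspace (E a)).

Lemma rho_lin_bundle E : lin_bundle (rho X E).
Proof.
split=> [a z [] //|a Xa]; split; first by split; last exact: span0.
- by move=> x y [_ Sx] [_ Sy]; split; last exact: in_spanD.
- by move=> c x [_ Sx]; split; last exact: in_spanZ.
Qed.

Lemma E0_lin_bundle : lin_bundle (E0 X (k:=k)).
Proof.
split=> [a z [] //|a Xa]; split.
- by split=> //; exists 0; apply: functional_extensionality => m; rewrite mul0r.
- move=> x y [_ [l1 ->]] [_ [l2 ->]]; split=> //; exists (l1 + l2).
  by apply: functional_extensionality => m; rewrite mulrDl.
- move=> c x [_ [l ->]]; split=> //; exists (c * l).
  by apply: functional_extensionality => m; rewrite mulrA.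
Qed.

Lemma xi_alpha_zero al b : xi_alpha (fun _ : midx n k => 0 : R) al b = 0.
Proof. by rewrite /xi_alpha /dapp big1 // => m _; rewrite mulr0. Qed.

Lemma DeltaE_diag E a z : lin_bundle E -> E a z -> DeltaE X E a a z.
Proof.
move=> [EX Elin] Eaz; have Xa := EX _ _ Eaz.
exists z, (fun _ => 0); split=> //.
- by case: (Elin a Xa).
- by apply: functional_extensionality => m; rewrite addr0.
- by move=> al; rewrite xi_alpha_zero normr0 mulr0.
Qed.

Lemma rho_closure E a z : lin_bundle E -> X a -> in_closure E a z -> rho X E a z.
Proof.
move=> linE Xa Ecl; split=> //; apply: in_span_mem; split=> // e e0.
have [a' [z' [Ez' aa' zz']]] := Ecl e e0.
by exists a', a', z'; split=> //; apply: DeltaE_diag.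
Qed.

Lemma rho_sub E a z : lin_bundle E -> E a z -> rho X E a z.
Proof.
move=> linE Eaz; apply: rho_closure => //; first exact: linE.1 Eaz.
by move=> e e0; exists a, z; split=> // [|m]; [apply: pt_close_refl | rewrite subrr normr0].
Qed.

Lemma rho_local E F a (r : R) : 0 < r ->
  (forall b, X b -> pt_close r a b -> forall z, E b z -> F b z) ->
  forall z, rho X E a z -> rho X F a z.
Proof.
move=> r0 EF z [Xa]; elim=> [|c eta xi [_ _ Ecl] _ [_ IH]]; first by split=> //; exact: span0.
split=> //; apply: spanS IH; split=> // e e0.
have er0 : 0 < Num.min e r by rewrite lt_min e0 r0.
have le_e : Num.min e r <= e by rewrite ge_min lexx.
have le_r : Num.min e r <= r by rewrite ge_min lexx orbT.
have [a' [b' [z' [[xi' [eta' [[Xa' Xb'] Exi Eeta -> bound]]] aa' ab' zz']]]] := Ecl _ er0.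
exists a', b', (fun m => xi' m + eta' m); split.
- exists xi', eta'; split=> //; apply: EF => //; exact: pt_close_le le_r _.
- exact: pt_close_le le_e aa'.
- exact: pt_close_le le_e ab'.
- exact: dual_close_le le_e zz'.
Qed.

Definition rho_iter j : bundle R n k := iter j (@rho R n X k) (@E0 R n X k).

Lemma rho_iter_lin_bundle j : lin_bundle (rho_iter j).
Proof. by case: j => [|j]; [exact: E0_lin_bundle | exact: rho_lin_bundle]. Qed.

Lemma rho_iter_incr j a z : rho_iter j a z -> rho_iter j.+1 a z.
Proof. exact/rho_sub/rho_iter_lin_bundle. Qed.

End Rho.

Section Coordinates.
Variables (R : realType) (n k : nat).
Local Notation N := (rdim n k).
Implicit Types (S : dual R n k -> Prop) (z : dual R n k).

Definition toRow z : 'rV[R]_N := \row_(i < N) z (enum_val i).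
Definition fromRow (v : 'rV[R]_N) : dual R n k := fun m => v 0 (enum_rank m).

Lemma fromRowK z : fromRow (toRow z) = z.
Proof. by apply: functional_extensionality => m; rewrite /fromRow mxE enum_rankK. Qed.

Lemma toRowK v : toRow (fromRow v) = v.
Proof. by apply/rowP => i; rewrite mxE /fromRow enum_valK. Qed.

Lemma lin_subspace_submx S c (M : 'M[R]_(c, N)) :
  lin_subspace S -> (forall i, S (fromRow (row i M))) ->
  forall v, (v <= M)%MS -> S (fromRow v).
Proof.
move=> [S0 SD SZ] SM v /submxP [u ->]; rewrite mulmx_sum_row.
apply: (big_ind (S \o fromRow)) => [|x y Sx Sy|i _] /=.
- by have -> : fromRow 0 = (fun _ => 0) by apply: functional_extensionality => m; rewrite /fromRow mxE.
- have -> : fromRow (x + y) = (fun m => fromRow x m + fromRow y m).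
    by apply: functional_extensionality => m; rewrite /fromRow mxE.
  exact: SD.
- have -> : fromRow (u 0 i *: row i M) = (fun m => u 0 i * fromRow (row i M) m).
    by apply: functional_extensionality => m; rewrite /fromRow mxE.
  exact: SZ.
Qed.

Definition free_in S c :=
  exists M : 'M[R]_(c, N), row_free M /\ forall i, S (fromRow (row i M)).

Definition dim_ge S c := exists2 c', (c <= c')%N & free_in S c'.

Lemma free_in0 S : free_in S 0.
Proof.
exists 0; split; last by case.
by rewrite /row_free; apply/eqP/eqP; rewrite -leqn0 rank_leq_row.
Qed.

Lemma free_in_leq S c : free_in S c -> (c <= N)%N.
Proof. by case=> M [freeM _]; rewrite -(eqP freeM) rank_leq_col. Qed.

Lemma free_in_grow S c (M : 'M[R]_(c, N)) z :
  row_free M -> (forall i, S (fromRow (row i M))) -> S z ->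
  ~~ (toRow z <= M)%MS -> free_in S c.+1.
Proof.
move=> freeM SM Sz zM; exists (col_mx (toRow z) M); split.
- have ltM : (M < toRow z + M)%MS by rewrite ltmxE addsmxSr addsmx_sub negb_and zM.
  have := mxrank_adds_leqif (toRow z) M; rewrite rank_rV (eqP freeM) => -[le_sum _].
  move: ltM; rewrite ltmxErank (eqP freeM) => /andP [_ lt_sum].
  have rank_col : \rank (col_mx (toRow z) M) = (1 + c)%N.
    rewrite -addsmxE; apply/anti_leq.
    by rewrite lt_sum (leq_trans le_sum) // leq_add2r leq_b1.
  exact/eqP/rank_col.
- move=> i; have -> : i = @unsplit 1 c (@split 1 c i) :> 'I_(1 + c) by rewrite splitK.
  case: (@split 1 c i) => j /=.
  + by have /= -> := @rowKu _ 1 c N j (toRow z) M; rewrite row_id fromRowK.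
  + by have /= -> := @rowKd _ 1 c N j (toRow z) M.
Qed.

Lemma maximal_free_in S : exists d (B : 'M[R]_(d, N)),
  [/\ row_free B, forall i, S (fromRow (row i B)) & forall z, S z -> (toRow z <= B)%MS].
Proof.
suff ext m d : (N - d <= m)%N -> free_in S d -> exists d (B : 'M[R]_(d, N)),
    [/\ row_free B, forall i, S (fromRow (row i B)) & forall z, S z -> (toRow z <= B)%MS].
  by apply: (ext N 0%N); [rewrite subn0 | exact: free_in0].
elim: m d => [|m IH] d le_m [M [freeM SM]];
  (have [[z [Sz zM]]|spanM] := classic (exists z, S z /\ ~~ (toRow z <= M)%MS);
   last by exists d, M; split=> // z Sz; apply: contraT => zM; case: spanM; exists z).
- have := free_in_leq (free_in_grow freeM SM Sz zM); lia.
- by apply: (IH d.+1); [lia | exact: free_in_grow freeM SM Sz zM].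
Qed.

End Coordinates.

Section RowSpaces.
Variables (R : realFieldType) (N : nat).

Lemma cap_compl_neq0 c d (M : 'M[R]_(c, N)) (B : 'M[R]_(d, N)) :
  row_free M -> row_free B -> (d < c)%N -> (M :&: B^C)%MS != 0.
Proof.
move=> freeM freeB lt_dc; rewrite -mxrank_eq0 -lt0n.
have := mxrank_sum_cap M (B^C)%MS; rewrite (eqP freeM) mxrank_compl (eqP freeB).
have := rank_leq_col (M + B^C)%MS; have := rank_leq_col B; rewrite (eqP freeB).
lia.
Qed.

Lemma normalize_row (v : 'rV[R]_N) : v != 0 ->
  exists w : 'rV[R]_N, [/\ (w <= v)%MS, forall t, `|w 0 t| <= 1 & exists t, `|w 0 t| = 1].
Proof.
move=> v0; have /existsP [t1 vt1] : [exists t, v 0 t != 0].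
  apply: contraNT v0 => /existsPn v0; apply/eqP/rowP => t.
  by rewrite mxE; apply/eqP; move: (v0 t); rewrite negbK.
have [tm _ vtm_max] := @arg_maxP _ _ _ t1 xpredT (fun t => `|v 0 t|) isT.
have vtm0 : 0 < `|v 0 tm| by apply: lt_le_trans (vtm_max t1 isT); rewrite normr_gt0.
exists (`|v 0 tm|^-1 *: v); split.
- exact: scalemx_sub.
- by move=> t; rewrite mxE normrM normfV normr_id ler_pdivrMl // mulr1; exact: vtm_max.
- by exists tm; rewrite mxE normrM normfV normr_id mulVf // gt_eqF.
Qed.

Lemma lin_form_closed (T : finType) (K u : T -> R) :
  (forall e, 0 < e -> exists2 v : T -> R, \sum_t v t * K t = 0 & forall t, `|u t - v t| < e) ->
  \sum_t u t * K t = 0.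
Proof.
move=> approx; apply/eqP; rewrite -normr_le0; apply/ler_addgt0Pr => e e0; rewrite add0r.
pose kap := \sum_t `|K t| + 1.
have kap0 : 0 < kap by rewrite ltr_wpDl ?sumr_ge0.
have [v v0 uv] := approx (e / kap) (divr_gt0 e0 kap0).
have -> : \sum_t u t * K t = \sum_t (u t - v t) * K t.
  by under [RHS]eq_bigr do rewrite mulrBl; rewrite sumrB v0 subr0.
apply: le_trans (ler_norm_sum _ _ _) _.
apply: (@le_trans _ _ (\sum_t e / kap * `|K t|)).
  by apply: ler_sum => t _; rewrite normrM ler_wpM2r // ltW.
by rewrite -mulr_sumr mulrAC ler_pdivrMr // ler_wpM2l ?(ltW e0) // lerDl ler01.
Qed.

Lemma submx_closed m (C : 'M[R]_(m, N)) (u : 'rV[R]_N) :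
  (forall e, 0 < e -> exists2 v : 'rV[R]_N, (v <= C)%MS & forall t, `|u 0 t - v 0 t| < e) ->
  (u <= C)%MS.
Proof.
have coker_row (w : 'rV[R]_N) j : (w *m cokermx C) 0 j = \sum_t w 0 t * cokermx C t j.
  by rewrite mxE.
move=> approx; rewrite submxE; apply/eqP/rowP => j.
rewrite coker_row mxE; apply: lin_form_closed => e e0.
have [v vC uv] := approx e e0; exists (fun t => v 0 t) => //.
by move: vC; rewrite submxE => /eqP/rowP/(_ j); rewrite coker_row mxE.
Qed.

End RowSpaces.

Section ClusterPoints.
Variable R : realType.

Lemma cluster_point_real (B : R -> R -> Prop) :
  (forall e e' x, 0 < e -> e <= e' -> B e x -> B e' x) ->
  (forall e, 0 < e -> exists x, B e x) ->
  (forall e x, B e x -> `|x| <= 1) ->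
  exists xs, forall e, 0 < e -> exists x, B e x /\ `|xs - x| < e.
Proof.
move=> Bmon Bne Bbnd.
(* [sup S] is the lim sup of the sets [B e] as [e] decreases to 0. *)
pose S x := forall e, 0 < e -> exists y, B e y /\ x <= y.
have supS : has_sup S.
  split.
  - exists (-1) => e e0; have [y By] := Bne e e0; exists y; split=> //.
    by have := Bbnd _ _ By; rewrite ler_norml => /andP [].
  - exists 1 => x Sx; have [y [By xy]] := Sx 1 ltr01.
    by apply: le_trans xy _; have := Bbnd _ _ By; rewrite ler_norml => /andP [].
exists (sup S) => e e0.
have [x Sx lt_x] := sup_adherent e0 supS.
have [e1 [e10 Bbelow]] : exists e1, 0 < e1 /\ forall y, B e1 y -> y < sup S + e.
  apply: NNPP => noe1.
  have : S (sup S + e).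
    move=> e' e'0; apply: NNPP => noy; apply: noe1; exists e'; split=> // y By.
    by rewrite ltNge; apply/negP => le_y; apply: noy; exists y.
  by move/(sup_upper_bound supS); rewrite gerDl leNgt e0.
have e20 : 0 < Num.min e e1 by rewrite lt_min e0 e10.
have [y [By le_xy]] := Sx _ e20.
have lt_y : y < sup S + e by apply/Bbelow/(Bmon _ _ _ e20 _ By); rewrite ge_min lexx orbT.
exists y; split; first by apply: Bmon e20 _ By; rewrite ge_min lexx.
by rewrite ltr_norml; apply/andP; split; lra.
Qed.

Lemma cluster_point_fin (T : finType) (A : R -> (T -> R) -> Prop) :
  (forall e e' v, 0 < e -> e <= e' -> A e v -> A e' v) ->
  (forall e, 0 < e -> exists v, A e v) ->
  (forall e v, A e v -> forall t, `|v t| <= 1) ->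
  exists vs : T -> R, forall e, 0 < e -> exists v, A e v /\ forall t, `|vs t - v t| < e.
Proof.
move=> Amon Ane Abnd.
suff cluster_on (s : seq T) : exists vs : T -> R, forall e, 0 < e ->
    exists v, A e v /\ forall t, t \in s -> `|vs t - v t| < e.
  have [vs svs] := cluster_on (enum T); exists vs => e e0.
  by have [v [Av vsv]] := svs e e0; exists v; split=> // t; apply: vsv; rewrite mem_enum.
elim: s => [|t0 s [vs IH]].
  by exists (fun _ => 0) => e e0; have [v Av] := Ane e e0; exists v.
pose B e x := exists v, (A e v /\ forall t, t \in s -> `|vs t - v t| < e) /\ v t0 = x.
have [xs Hxs] : exists xs, forall e, 0 < e -> exists x, B e x /\ `|xs - x| < e.
  apply: cluster_point_real.
  - move=> e e' x e0 ee' [v [[Av vsv] <-]]; exists v; split=> //; split.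
      exact: Amon Av.
    by move=> t ts; apply: lt_le_trans ee'; apply: vsv.
  - by move=> e e0; have [v Hv] := IH e e0; exists (v t0), v.
  - by move=> e x [v [[Av _] <-]]; apply: Abnd Av t0.
exists (fun t => if t == t0 then xs else vs t) => e e0.
have [x [[v [[Av vsv] <-]] xsv]] := Hxs e e0.
exists v; split=> // t; rewrite in_cons; case: eqP => [->|_] //= ts.
exact: vsv.
Qed.

End ClusterPoints.

Section Semicontinuity.
Variables (R : realType) (n : nat) (X : pt R n -> Prop) (k : nat).
Implicit Types (E : bundle R n k) (a b : pt R n).

Lemma rho_dim_ge E a c : lin_bundle X E -> X a ->
  (forall e, 0 < e -> exists b, [/\ X b, pt_close e a b & dim_ge (E b) c]) ->
  dim_ge (rho X E a) c.
Proof.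
move=> linE Xa near_dim.
have [d [B [freeB rhoB spanB]]] := maximal_free_in (rho X E a).
have [le_cd | lt_dc] := leqP c d; first by exists d => //; exists B.
exfalso.
pose A e (v : dual R n k) := [/\ forall m, `|v m| <= 1, exists m, `|v m| = 1,
  (toRow v <= B^C)%MS & exists b, [/\ X b, pt_close e a b & E b v]].
have [vs vs_cluster] : exists vs, forall e, 0 < e -> exists v, A e v /\ dual_close e vs v.
  apply: cluster_point_fin.
  - move=> e e' v e0 ee' [v_le1 v1 vC [b [Xb ab Ebv]]]; split=> //.
    by exists b; split=> //; apply: pt_close_le ee' ab.
  - move=> e e0; have [b [Xb ab [c' le_cc' [M [freeM EM]]]]] := near_dim e e0.
    have /rowV0Pn [u uMC u0] := cap_compl_neq0 freeM freeB (leq_trans lt_dc le_cc').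
    have [w [wu w_le1 [t w1]]] := normalize_row u0.
    have wM : (w <= M)%MS := submx_trans wu (submx_trans uMC (capmxSl _ _)).
    have wC : (w <= B^C)%MS := submx_trans wu (submx_trans uMC (capmxSr _ _)).
    exists (fromRow w); split=> [m|||]; first exact: w_le1.
    + by exists (enum_val t); rewrite /fromRow enum_valK.
    + by rewrite toRowK.
    + by exists b; split=> //; apply: lin_subspace_submx (linE.2 b Xb) EM _ wM.
  - by move=> e v [].
have vsC : (toRow vs <= B^C)%MS.
  apply: submx_closed => e e0; have [v [[_ _ vC _] vsv]] := vs_cluster e e0.
  by exists (toRow v) => // t; rewrite !mxE.
have vs_rho : rho X E a vs.
  apply: rho_closure => // e e0; have [v [[_ _ _ [b [Xb ab Ebv]]] vsv]] := vs_cluster e e0.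
  by exists b, v.
have : (toRow vs <= B :&: B^C)%MS by rewrite sub_capmx spanB.
rewrite capmx_compl submx0 => /eqP vs0.
have half_gt0 : 0 < 1 / 2 :> R by lra.
have [v [[_ [m vm1] _ _] vsv]] := vs_cluster _ half_gt0.
have vsm0 : vs m = 0 by rewrite -(fromRowK vs) vs0 /fromRow mxE.
by move: (vsv m); rewrite vsm0 sub0r normrN vm1; lra.
Qed.

End Semicontinuity.

Section Stabilization.
Variables (R : realType) (n : nat) (X : pt R n -> Prop) (k : nat).
Local Notation E j := (@rho_iter R n X k j).

Definition rho_iter_grows j a := X a /\ ~ (forall z, E j.+1 a z -> E j a z).

Lemma rho_iter_grows_near j a : rho_iter_grows j.+1 a ->
  forall e, 0 < e -> exists b, [/\ X b, pt_close e a b & rho_iter_grows j b].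
Proof.
move=> [Xa not_stable] e e0; apply: NNPP => no_b; apply: not_stable.
apply: rho_local e0 _ => b Xb ab z Ez; apply: NNPP => nEz; apply: no_b.
by exists b; split=> //; split=> // stable_b; apply/nEz/stable_b.
Qed.

Lemma rho_iter_grows_near2 j a : rho_iter_grows j.+2 a ->
  forall e, 0 < e -> exists b, [/\ X b, pt_close e a b & rho_iter_grows j b].
Proof.
move=> grows e e0; have e20 : 0 < e / 2 by rewrite divr_gt0.
have [b [_ ab growsb]] := rho_iter_grows_near grows e20.
have [c [Xc bc growsc]] := rho_iter_grows_near growsb e20.
by exists c; split=> //; rewrite [e]splitr; apply: pt_close_trans ab bc.
Qed.

Lemma dim_ge_grows j b c :
  rho_iter_grows j b -> dim_ge (E j b) c -> dim_ge (E j.+1 b) c.+1.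
Proof.
move=> [Xb not_stable] [c' le_cc' [M [freeM EM]]].
have [z [Ez nEz]] : exists z, E j.+1 b z /\ ~ E j b z.
  apply: NNPP => no_z; apply: not_stable => z Ez.
  by apply: NNPP => nEz; apply: no_z; exists z.
exists c'.+1 => //; apply: free_in_grow freeM _ Ez _.
- by move=> i; apply: rho_iter_incr.
- apply/negP => zM; apply: nEz; rewrite -(fromRowK z).
  exact: lin_subspace_submx ((rho_iter_lin_bundle X k j).2 b Xb) EM _ zM.
Qed.

Lemma rho_iter_grows_dim_ge m a : rho_iter_grows (2 * m) a -> dim_ge (E (2 * m) a) m.
Proof.
elim: m a => [|m IH] a grows; first by exists 0%N => //; apply: free_in0.
rewrite (_ : 2 * m.+1 = (2 * m).+2)%N in grows *; last by lia.
apply: (rho_dim_ge (E := E (2 * m).+1)); [exact: rho_iter_lin_bundle | by case: grows | move=> e e0].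
have [b [Xb ab growsb]] := rho_iter_grows_near2 grows e0.
by exists b; split=> //; apply: dim_ge_grows growsb (IH b growsb).
Qed.

Lemma rho_iter_stable a z : X a -> E (2 * rdim n k).+1 a z -> E (2 * rdim n k) a z.
Proof.
move=> Xa; move: z; apply: NNPP => not_stable.
have grows : rho_iter_grows (2 * rdim n k) a by [].
have [c' lt_c' /free_in_leq] := dim_ge_grows grows (rho_iter_grows_dim_ge grows).
lia.
Qed.

Lemma tau_lin_bundle : lin_bundle X (tau X (k:=k)).
Proof. exact: rho_iter_lin_bundle. Qed.

Lemma tau_closed a z : X a -> in_closure (tau X (k:=k)) a z -> tau X a z.
Proof.
move=> Xa cl; apply: (rho_iter_stable Xa).
exact: rho_closure tau_lin_bundle Xa cl.
Qed.

End Stabilization.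

Lemma big_pointwise_ind (P T I : Type) (Q : (P -> T) -> Prop) (op : T -> T -> T) (idx : T)
    (s : seq I) (Pr : pred I) (F : I -> P -> T) :
  Q (fun _ => idx) -> (forall f g, Q f -> Q g -> Q (fun p => op (f p) (g p))) ->
  (forall i, Q (F i)) -> Q (fun p => \big[op/idx]_(i <- s | Pr i) F i p).
Proof.
move=> Qidx Qop QF; elim: s => [|i s IH].
  by under [fun p => _]functional_extensionality do rewrite big_nil.
under [fun p => _]functional_extensionality do rewrite big_cons.
by case: (Pr i) => //; apply: Qop.
Qed.

Section PointwiseContinuity.
Variables (R : realType) (P : Type) (ball : R -> P -> Prop) (p0 : P).
Hypothesis ball_le : forall d d' p, d <= d' -> ball d p -> ball d' p.

Definition cont_at (f : P -> R) :=
  forall e, 0 < e -> exists2 d, 0 < d & forall p, ball d p -> `|f p0 - f p| < e.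

Lemma ball_min d1 d2 p : ball (Num.min d1 d2) p -> ball d1 p /\ ball d2 p.
Proof. by move=> b12; split; apply: ball_le b12; rewrite ge_min lexx ?orbT. Qed.

Lemma cont_at_const c : cont_at (fun _ => c).
Proof. by move=> e e0; exists 1 => // p _; rewrite subrr normr0. Qed.

Lemma cont_at_add f g : cont_at f -> cont_at g -> cont_at (fun p => f p + g p).
Proof.
move=> cf cg e e0; have e20 : 0 < e / 2 by rewrite divr_gt0.
have [d1 d10 fd] := cf _ e20; have [d2 d20 gd] := cg _ e20.
exists (Num.min d1 d2) => [|p /ball_min [p1 p2]]; first by rewrite lt_min d10 d20.
rewrite opprD addrACA; apply: le_lt_trans (ler_normD _ _) _.
by rewrite [e]splitr ltrD ?fd ?gd.
Qed.

Lemma cont_at_mul f g : cont_at f -> cont_at g -> cont_at (fun p => f p * g p).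
Proof.
move=> cf cg e e0.
pose K := `|f p0| + `|g p0| + 1.
have K0 : 0 < K by rewrite ltr_wpDl ?addr_ge0.
pose u := Num.min 1 (e / K).
have u0 : 0 < u by rewrite lt_min ltr01 divr_gt0.
have u1 : u <= 1 by rewrite ge_min lexx.
have uK : u * K <= e by rewrite -ler_pdivlMr // ge_min lexx orbT.
have [d1 d10 fd] := cf u u0; have [d2 d20 gd] := cg u u0.
exists (Num.min d1 d2) => [|p /ball_min [p1 p2]]; first by rewrite lt_min d10 d20.
have := fd p p1; have := gd p p2.
set x := f p0 - f p; set y := g p0 - g p => lt_y lt_x.
have -> : f p0 * g p0 - f p * g p = f p0 * y + x * g p0 - x * y by rewrite /x /y; ring.
have b1 : `|f p0 * y| <= `|f p0| * u by rewrite normrM ler_wpM2l // ltW.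
have b2 : `|x * g p0| <= u * `|g p0| by rewrite normrM ler_wpM2r // ltW.
have b3 : `|x * y| < u.
  rewrite normrM; apply: le_lt_trans lt_y.
  by rewrite -[leRHS]mul1r ler_wpM2r // (le_trans (ltW lt_x)).
have := ler_normB (f p0 * y + x * g p0) (x * y); have := ler_normD (f p0 * y) (x * g p0).
rewrite /K in uK; nra.
Qed.

Lemma cont_at_sum (I : Type) (s : seq I) (Pr : pred I) (F : I -> P -> R) :
  (forall i, cont_at (F i)) -> cont_at (fun p => \sum_(i <- s | Pr i) F i p).
Proof. by apply: big_pointwise_ind; [exact: cont_at_const | exact: cont_at_add]. Qed.

Lemma cont_at_uniform (I : finType) (F : I -> P -> R) : (forall i, cont_at (F i)) ->
  forall e, 0 < e -> exists2 d, 0 < d & forall p, ball d p -> forall i, `|F i p0 - F i p| < e.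
Proof.
move=> cF e e0.
suff cont_on (s : seq I) : exists2 d, 0 < d &
    forall p, ball d p -> forall i, i \in s -> `|F i p0 - F i p| < e.
  by have [d d0 Fd] := cont_on (enum I); exists d => // p pd i; rewrite Fd ?mem_enum.
elim: s => [|i s [d d0 IH]]; first by exists 1.
have [di di0 Fid] := cF i e e0.
exists (Num.min d di) => [|p /ball_min [pd pdi] j]; first by rewrite lt_min d0 di0.
by rewrite in_cons => /predU1P [->|]; [exact: Fid | exact: IH].
Qed.

Section PolynomialValued.
Variable m : nat.

Definition coef_cont_at (F : P -> {mpoly R[m]}) := forall al, cont_at (fun p => (F p)@_al).

Lemma coef_cont_at_const c : coef_cont_at (fun _ => c).
Proof. by move=> al; apply: cont_at_const. Qed.

Lemma coef_cont_at_add F G :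
  coef_cont_at F -> coef_cont_at G -> coef_cont_at (fun p => F p + G p).
Proof.
move=> cF cG al; under [fun p => _]functional_extensionality do rewrite mcoeffD.
exact: cont_at_add.
Qed.

Lemma coef_cont_at_mul F G :
  coef_cont_at F -> coef_cont_at G -> coef_cont_at (fun p => F p * G p).
Proof.
move=> cF cG al; under [fun p => _]functional_extensionality do rewrite mcoeffM.
by apply: cont_at_sum => i; apply: cont_at_mul.
Qed.

Lemma coef_cont_at_scale f F :
  cont_at f -> coef_cont_at F -> coef_cont_at (fun p => f p *: F p).
Proof.
move=> cf cF al; under [fun p => _]functional_extensionality do rewrite mcoeffZ.
exact: cont_at_mul.
Qed.

Lemma coef_cont_at_C f : cont_at f -> coef_cont_at (fun p => (f p)%:MP).
Proof.
move=> cf al; under [fun p => _]functional_extensionality do rewrite mcoeffC.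
by apply: cont_at_mul => //; apply: cont_at_const.
Qed.

Lemma coef_cont_at_sum (I : Type) (s : seq I) (Pr : pred I) (F : I -> P -> {mpoly R[m]}) :
  (forall i, coef_cont_at (F i)) -> coef_cont_at (fun p => \sum_(i <- s | Pr i) F i p).
Proof. by apply: big_pointwise_ind; [exact: coef_cont_at_const | exact: coef_cont_at_add]. Qed.

Lemma coef_cont_at_comp l (Q : {mpoly R[l]}) (T : P -> l.-tuple {mpoly R[m]}) :
  (forall i, coef_cont_at (fun p => tnth (T p) i)) -> coef_cont_at (fun p => Q \mPo T p).
Proof.
move=> cT; under [fun p => _]functional_extensionality do rewrite comp_mpolyEX.
apply: coef_cont_at_sum => al; apply: coef_cont_at_scale; first exact: cont_at_const.
under [fun p => _]functional_extensionality do rewrite comp_mpolyX.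
apply: (big_pointwise_ind (Q := coef_cont_at)) => [|F G|i];
  [exact: coef_cont_at_const | exact: coef_cont_at_mul |].
elim: (al i) => [|d IH]; first exact: coef_cont_at_const.
by under [fun p => _]functional_extensionality do rewrite exprS; apply: coef_cont_at_mul.
Qed.

End PolynomialValued.

End PointwiseContinuity.

Section IotaContinuity.
Variables (R : realType) (n p q : nat).
Local Notation PT := (pt R n * dual R n p)%type.

Definition pt_dual_ball (x0 : PT) (d : R) (x : PT) :=
  pt_close d x0.1 x.1 /\ dual_close d x0.2 x.2.

Lemma pt_dual_ball_le x0 d d' x : d <= d' -> pt_dual_ball x0 d x -> pt_dual_ball x0 d' x.
Proof. by move=> dd' [x01 x02]; split; [apply: pt_close_le x01 | apply: dual_close_le x02]. Qed.

Section AtPoint.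
Variable x0 : PT.
Let ball_le := @pt_dual_ball_le x0.
Local Notation coef_cont := (coef_cont_at (pt_dual_ball x0) x0).

Lemma cont_at_pt_coord i : cont_at (pt_dual_ball x0) x0 (fun x => x.1 i).
Proof. by move=> e e0; exists e => // x []. Qed.

Lemma cont_at_dual_coord al : cont_at (pt_dual_ball x0) x0 (fun x => x.2 al).
Proof. by move=> e e0; exists e => // x []. Qed.

Lemma coef_cont_at_comp_shift (s : R) (Q : {mpoly R[n]}) :
  coef_cont (fun x => Q \mPo [tuple 'X_i + (s * x.1 i)%:MP | i < n]).
Proof.
apply: coef_cont_at_comp => // i.
under [fun x => _]functional_extensionality do rewrite tnth_mktuple.
apply: coef_cont_at_add => //; first exact: coef_cont_at_const.
apply: coef_cont_at_C => //; apply: cont_at_mul => //; first exact: cont_at_const.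
exact: cont_at_pt_coord.
Qed.

Lemma coef_cont_at_pi_a (P : {mpoly R[n]}) : coef_cont (fun x => pi_a p x.1 P).
Proof.
have -> : (fun x : PT => pi_a p x.1 P) = (fun x => \sum_(al : midx n p)
    (P \mPo [tuple 'X_i + (1 * x.1 i)%:MP | i < n])@_(val al) *:
    ('X_[val al] \mPo [tuple 'X_i + (-1 * x.1 i)%:MP | i < n])).
  apply: functional_extensionality => x; rewrite /pi_a raddf_sum /=.
  apply: eq_bigr => al _; rewrite comp_mpolyZ.
  have shift1 : [tuple 'X_i + (x.1 i)%:MP | i < n] = [tuple 'X_i + (1 * x.1 i)%:MP | i < n].
    by apply: eq_mktuple => i; rewrite mul1r.
  have shiftN1 : [tuple 'X_i - (x.1 i)%:MP | i < n] = [tuple 'X_i + (-1 * x.1 i)%:MP | i < n].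
    by apply: eq_mktuple => i; rewrite mulN1r mpolyCN.
  by rewrite shift1 shiftN1.
apply: coef_cont_at_sum => // al.
by apply: coef_cont_at_scale => //; apply: coef_cont_at_comp_shift.
Qed.

Lemma cont_at_iota_a m :
  cont_at (pt_dual_ball x0) x0 (fun x => @iota_a R n p q x.1 x.2 m).
Proof.
rewrite /iota_a /dapp; apply: cont_at_sum => // al.
apply: cont_at_mul => //; [exact: coef_cont_at_pi_a | exact: cont_at_dual_coord].
Qed.

End AtPoint.

Lemma in_closure_iota_a (S : bundle R n p) (T : bundle R n q) a xi :
  (forall a' xi', S a' xi' -> T a' (iota_a a' xi')) ->
  in_closure S a xi -> in_closure T a (iota_a a xi).
Proof.
move=> ST cl e e0.
have [d d0 iota_d] := cont_at_uniform (@pt_dual_ball_le (a, xi)) (@cont_at_iota_a (a, xi)) e0.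
have de0 : 0 < Num.min d e by rewrite lt_min d0 e0.
have [a' [xi' [Sa' aa' xixi']]] := cl _ de0.
have [le_d le_e] : Num.min d e <= d /\ Num.min d e <= e by rewrite !ge_min !lexx orbT.
exists a', (iota_a a' xi'); split; [exact: ST | exact: pt_close_le aa' |].
move=> m; apply: (iota_d (a', xi')).
by split; [apply: pt_close_le aa' | apply: dual_close_le xixi'].
Qed.

Lemma lin_subspace_iota_a a (S : dual R n q -> Prop) :
  lin_subspace S -> lin_subspace (fun xi : dual R n p => S (iota_a a xi)).
Proof.
move=> [S0 SD SZ]; split=> [|x y Sx Sy|c x Sx].
- rewrite (_ : @iota_a R n p q a _ = fun _ => 0) //.
  by apply: functional_extensionality => m; rewrite /iota_a /dapp big1 // => al _; rewrite mulr0.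
- rewrite (_ : @iota_a R n p q a _ = fun m => iota_a a x m + iota_a a y m); first exact: SD.
  apply: functional_extensionality => m; rewrite /iota_a /dapp -big_split.
  by apply: eq_bigr => al _; rewrite mulrDr.
- rewrite (_ : @iota_a R n p q a _ = fun m => c * iota_a a x m); first exact: SZ.
  apply: functional_extensionality => m; rewrite /iota_a /dapp mulr_sumr.
  by apply: eq_bigr => al _; rewrite mulrCA.
Qed.

End IotaContinuity.

Theorem lemma2p2 (R : realType) (n : nat) (X : pt R n -> Prop) (p q : nat) :
  closed_set X -> (p <= q)%N -> closed_subbundle X (@tau_p R n X p q).
Proof.
move=> _ _; split=> [a xi [] // | a Xa | a xi Xa cl].
- have [S0 SD SZ] := lin_subspace_iota_a p a ((tau_lin_bundle X q).2 a Xa).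
  by split=> [|x y [_ Sx] [_ Sy]|c x [_ Sx]]; split=> //; [apply: SD | apply: SZ].
- split=> //; apply: tau_closed Xa _.
  by apply: in_closure_iota_a cl => a' xi' [].
Qed.
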